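(* Let $N, M$ be positive integers, let $B=[b_{ij}]$ be a real $N\times M$ matrix and $C=[c_{ij}]$ a real $M\times N$ matrix. Define the ultradiscrete product $B\otimes C$ as the $N\times N$ matrix $$B\otimes C=\Big[\max_{1\le k\le M}(b_{ik}+c_{kj})\Big]_{1\le i,j\le N}.$$ Then $$\mathrm{UP}[B\otimes C]=\max_{1\le j_1\le j_2\le\cdots\le j_N\le M}\Big(\mathrm{UP}[B]^{1\dots N}_{j_1\dots j_N}+\mathrm{UP}[C]^{j_1\dots j_N}_{1\dots N}\Big).$$
   Context: For a real $N\times N$ matrix $A=[a_{ij}]$, the ultradiscrete permanent is $\mathrm{UP}[A]=\max_{\pi}(a_{1\pi_1}+a_{2\pi_2}+\cdots+a_{N\pi_N})$, the maximum over all permutations $\pi=(\pi_1,\dots,\pi_N)$ of $\{1,\dots,N\}$. For indices $1\le j_1\le\cdots\le j_N\le M$ (repetitions allowed), $\mathrm{UP}[B]^{1\dots N}_{j_1\dots j_N}$ denotes the ultradiscrete permanent of the $N\times N$ matrix whose $k$-th column is the $j_k$-th column of $B$ (all rows of $B$ kept), and $\mathrm{UP}[C]^{j_1\dots j_N}_{1\dots N}$ denotes the ultradiscrete permanent of the $N\times N$ matrix whose $k$-th row is the $j_k$-th row of $C$ (all columns of $C$ kept). *)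

From HB Require Import structures.
From mathcomp Require Import all_boot all_order all_algebra all_fingroup.
Set Implicit Arguments. Unset Strict Implicit. Unset Printing Implicit Defensive.
Import Order.TTheory GRing.Theory Num.Theory.
Local Open Scope ring_scope.

(* Maximum of F over the (finite) set of x : T satisfying P.  When that set
   is nonempty this is the genuine maximum; on the empty set it is 0
   (a junk value never used in the theorem, where all index sets are nonempty). *)
Definition umax (R : realDomainType) (T : finType) (P : pred T) (F : T -> R) : R :=
  match [pick x | P x] with
  | Some x0 => \big[Num.max/F x0]_(x | P x) F x
  | None => 0
  end.

Definition UP (R : realDomainType) (n : nat) (A : 'M[R]_n) : R :=
  umax (fun _ : 'S_n => true) (fun s : 'S_n => \sum_(i < n) A i (s i)).

Definition uprod (R : realDomainType) (N M : nat) (B : 'M[R]_(N, M)) (C : 'M[R]_(M, N))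
  : 'M[R]_N :=
  \matrix_(i < N, j < N) umax (fun _ : 'I_M => true) (fun k => B i k + C k j).

Definition nondecr (N M : nat) (j : {ffun 'I_N -> 'I_M}) : bool :=
  [forall a : 'I_N, forall b : 'I_N, (a <= b)%N ==> (j a <= j b)%N].

From HB Require Import structures.
From mathcomp Require Import all_boot all_order all_algebra all_fingroup.
Import Order.TTheory GRing.Theory Num.Theory.
Local Open Scope ring_scope.
Set Implicit Arguments.
Unset Strict Implicit.

(* Expanding each entry of B (x) C as a max over k, UP[B (x) C] is the maximum
   of sum_i (b_{i f(i)} + c_{f(i) s(i)}) over permutations s and arbitrary maps
   f : [1,N] -> [1,M].  Sorting f, i.e. writing f = j o p^-1 with j weakly
   increasing and p a permutation, splits such a sum into a term of
   UP[B]_{j_1..j_N} and a term of UP[C]^{j_1..j_N}; conversely the two optimal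
   permutations of these minors compose into a term of UP[B (x) C]. *)

Section UltradiscreteMax.
Variables (R : realDomainType) (T : finType) (P : pred T) (F : T -> R).

Lemma umax_ub x : P x -> F x <= umax P F.
Proof.
move=> Px; rewrite /umax; case: pickP => [x0 _|]; last by move/(_ x); rewrite Px.
exact: le_bigmax_cond.
Qed.

Lemma umax_attained x : P x -> exists2 y, P y & umax P F = F y.
Proof.
move=> Px; rewrite /umax; case: pickP => [x0 Px0|]; last by move/(_ x); rewrite Px.
apply: (big_ind (fun v => exists2 y, P y & v = F y)); first by exists x0.
- move=> _ _ [y Py ->] [z Pz ->].
  by case: (leP (F y) (F z)) => _; [exists z | exists y].
- by move=> y Py; exists y.
Qed.

End UltradiscreteMax.

Arguments umax_ub {R T P F} x _.
Arguments umax_attained {R T P} F x _.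

Section UltradiscretePermanent.
Variables (R : realDomainType) (n : nat) (A : 'M[R]_n).

Lemma le_UP (s : 'S_n) : \sum_(i < n) A i (s i) <= UP A.
Proof. exact: (umax_ub (F := fun s : 'S_n => \sum_i A i (s i))). Qed.

Lemma UP_attained : exists s : 'S_n, UP A = \sum_(i < n) A i (s i).
Proof.
rewrite /UP; have [s _ ->] :=
  umax_attained (P := fun _ => true) (fun s : 'S_n => \sum_i A i (s i)) 1%g isT.
by exists s.
Qed.

End UltradiscretePermanent.

Section UltradiscreteProduct.
Variables (R : realDomainType) (N M : nat) (B : 'M[R]_(N, M)) (C : 'M[R]_(M, N)).

Lemma le_uprod i j k : B i k + C k j <= uprod B C i j.
Proof. by rewrite mxE; exact: (umax_ub (F := fun k => B i k + C k j)). Qed.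

Lemma uprod_attained (k0 : 'I_M) i j : exists k, uprod B C i j = B i k + C k j.
Proof.
rewrite mxE; have [k _ ->] :=
  umax_attained (P := fun _ => true) (fun k => B i k + C k j) k0 isT.
by exists k.
Qed.

Lemma sum_le_UP_colsub_rowsub (j : {ffun 'I_N -> 'I_M}) (p q : 'S_N) :
  \sum_(i < N) (B (p i) (j i) + C (j i) (q i)) <= UP (colsub j B) + UP (rowsub j C).
Proof.
rewrite big_split /=; apply: lerD.
- have -> : \sum_i B (p i) (j i) = \sum_i colsub j B i ((p^-1)%g i).
    by rewrite [RHS](reindex_inj (@perm_inj _ p)); apply: eq_bigr => i _; rewrite mxE permK.
  exact: le_UP.
- have -> : \sum_i C (j i) (q i) = \sum_i rowsub j C i (q i).
    by apply: eq_bigr => i _; rewrite mxE.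
  exact: le_UP.
Qed.

Lemma UP_colsub_rowsub_le (j : {ffun 'I_N -> 'I_M}) :
  UP (colsub j B) + UP (rowsub j C) <= UP (uprod B C).
Proof.
have [p ->] := UP_attained (colsub j B); have [q ->] := UP_attained (rowsub j C).
apply: (le_trans _ (le_UP _ (p * q)%g)).
rewrite [X in _ + X](reindex_inj (@perm_inj _ p)) /= -big_split /=.
by apply: ler_sum => i _; rewrite [colsub _ _ _ _]mxE [rowsub _ _ _ _]mxE permM le_uprod.
Qed.

End UltradiscreteProduct.

Lemma exists_sorting_perm (N M : nat) (f : 'I_N -> 'I_M) :
  exists p : 'S_N, nondecr [ffun i => f (p i)].
Proof.
pose leo := fun a b : 'I_M => (a <= b)%N.
pose t := [tuple f i | i < N].
have [p sortE] : exists p : 'S_N, sort leo t = [tuple tnth t (p i) | i < N].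
  by apply/tuple_permP; rewrite perm_sort.
exists p; apply/forallP => a; apply/forallP => b; apply/implyP => le_ab.
have sorted_t : sorted leo (sort leo t) by apply: sort_sorted => x y; exact: leq_total.
have leo_trans : transitive leo by move=> y x z; exact: leq_trans.
have := sorted_leq_nth leo_trans (fun x => leqnn x) (f (p a)) sorted_t.
rewrite size_sort size_tuple => /(_ a b (ltn_ord a) (ltn_ord b) le_ab).
by rewrite sortE -!tnth_nth !tnth_mktuple !ffunE.
Qed.

Theorem proposition1 (R : realDomainType) (N M : nat) (hN : (0 < N)%N) (hM : (0 < M)%N)
  (B : 'M[R]_(N, M)) (C : 'M[R]_(M, N)) :
  UP (uprod B C) =
  umax (@nondecr N M) (fun j : {ffun 'I_N -> 'I_M} => UP (colsub j B) + UP (rowsub j C)).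
Proof.
pose k0 : 'I_M := Ordinal hM.
have nondecr_const : nondecr [ffun _ : 'I_N => k0].
  by apply/forallP => a; apply/forallP => b; rewrite !ffunE leqnn implybT.
apply: le_anti; apply/andP; split.
- have [s ->] := UP_attained (uprod B C).
  have [f fE] := fin_all_exists (fun i => uprod_attained B C k0 i (s i)).
  have [p nondecr_fp] := exists_sorting_perm f.
  apply: (le_trans _ (umax_ub _ nondecr_fp)).
  apply: (le_trans _ (sum_le_UP_colsub_rowsub B C _ p (p * s)%g)).
  rewrite (reindex_inj (@perm_inj _ p)) /=.
  by under eq_bigr do rewrite fE; under [X in _ <= X]eq_bigr do rewrite ffunE permM.
- have [j _ ->] := umax_attained
    (fun j : {ffun 'I_N -> 'I_M} => UP (colsub j B) + UP (rowsub j C)) _ nondecr_const.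
  exact: UP_colsub_rowsub_le.
Qed.
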